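(* Let $A=\{(0,0,0),(0,1,0),(1,0,0),(1,1,0)\}\subset\mathbb{R}^3$ and let $\pi\subset\mathbb{R}^3$ be the plane $x=\tfrac12$. Then the set $\Pi$ of points $M\in\pi\cap\mathbb{Q}^3$ such that the Euclidean distance $|MR|$ is rational for every $R\in A$ is dense in $\pi$ (with the Euclidean topology).
   Context: No further context is needed. *)

From Stdlib Require Import Reals QArith List.
Open Scope R_scope.

Definition point3 : Type := (R * R * R)%type.

Definition px (p : point3) : R := fst (fst p).
Definition py (p : point3) : R := snd (fst p).
Definition pz (p : point3) : R := snd p.

Definition is_rat (x : R) : Prop := exists q : Q, Q2R q = x.

Definition dist3 (p q : point3) : R :=
  sqrt ((px p - px q) ^ 2 + (py p - py q) ^ 2 + (pz p - pz q) ^ 2).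

Definition setA : list point3 :=
  ((0,0,0) :: (0,1,0) :: (1,0,0) :: (1,1,0) :: nil)%R.

Definition in_pi (p : point3) : Prop := px p = 1/2.

Definition in_Q3 (p : point3) : Prop := is_rat (px p) /\ is_rat (py p) /\ is_rat (pz p).

Definition in_Pi (M : point3) : Prop :=
  in_pi M /\ in_Q3 M /\ (forall Rp, In Rp setA -> is_rat (dist3 M Rp)).

(* Points of the plane x = 1/2 are equidistant from (0,0,0) and (1,0,0) and
   from (0,1,0) and (1,1,0), so only their distances a and b to (0,0,0) and
   (0,1,0) matter.  With p = a + b and q = a - b, such a point (1/2, y, z)
   satisfies y = (1 + p q)/2 and (p s)^2 - (2 z)^2 = 1 + s^2, where
   q^2 + s^2 = 1 (|q| < 1 is the strict triangle inequality).  Parametrizing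
   (q, s) rationally on the unit circle by t, and the factorizations
   (p s - 2 z)(p s + 2 z) of 1 + s^2 by m, gives a map (t, m) |-> (y, z) that
   is onto the plane, continuous, and sends rational parameters into Pi;
   density of Q^2 in R^2 finishes the proof. *)

From Stdlib Require Import Reals QArith Qreals List Lra Lia.
From Coquelicot Require Import Coquelicot.
Open Scope R_scope.

Lemma is_rat_Q q : is_rat (Q2R q).
Proof. now exists q. Qed.

Lemma is_rat_IZR z : is_rat (IZR z).
Proof. exists (inject_Z z). unfold Q2R; simpl; field. Qed.

Lemma is_rat_plus x y : is_rat x -> is_rat y -> is_rat (x + y).
Proof. intros [a <-] [b <-]. exists (a + b)%Q. apply Q2R_plus. Qed.

Lemma is_rat_mult x y : is_rat x -> is_rat y -> is_rat (x * y).
Proof. intros [a <-] [b <-]. exists (a * b)%Q. apply Q2R_mult. Qed.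

Lemma is_rat_opp x : is_rat x -> is_rat (- x).
Proof. intros [a <-]. exists (- a)%Q. apply Q2R_opp. Qed.

Lemma is_rat_minus x y : is_rat x -> is_rat y -> is_rat (x - y).
Proof. intros Hx Hy. apply is_rat_plus; [exact Hx | now apply is_rat_opp]. Qed.

Lemma is_rat_inv x : is_rat x -> x <> 0 -> is_rat (/ x).
Proof.
  intros [a <-] Hx. exists (/ a)%Q. apply Q2R_inv. intro Ha.
  apply Hx. rewrite (Qeq_eqR _ _ Ha). unfold Q2R; simpl; field.
Qed.

Lemma is_rat_div x y : is_rat x -> is_rat y -> y <> 0 -> is_rat (x / y).
Proof. intros Hx Hy Hy0. apply is_rat_mult; [exact Hx | now apply is_rat_inv]. Qed.

Lemma is_rat_pow x n : is_rat x -> is_rat (x ^ n).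
Proof.
  intros Hx. induction n as [|n IH]; simpl.
  - apply (is_rat_IZR 1).
  - now apply is_rat_mult.
Qed.

Lemma is_rat_sqrt_sqr x : is_rat x -> is_rat (sqrt (x ^ 2)).
Proof.
  intros Hx. rewrite <- Rsqr_pow2, sqrt_Rsqr_abs. unfold Rabs.
  destruct Rcase_abs; [now apply is_rat_opp | exact Hx].
Qed.

Ltac is_rat_closure := repeat match goal with
  | |- is_rat (_ / _) => apply is_rat_div
  | |- is_rat (_ + _) => apply is_rat_plus
  | |- is_rat (_ - _) => apply is_rat_minus
  | |- is_rat (_ * _) => apply is_rat_mult
  | |- is_rat (- _) => apply is_rat_opp
  | |- is_rat (_ ^ _) => apply is_rat_pow
  | |- is_rat (Q2R _) => apply is_rat_Q
  | |- is_rat (IZR _) => apply is_rat_IZR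
  end.

Lemma in_Pi_of_rational_distances y z a b :
  is_rat y -> is_rat z -> is_rat a -> is_rat b ->
  1/4 + y^2 + z^2 = a^2 -> 1/4 + (y - 1)^2 + z^2 = b^2 ->
  in_Pi (1/2, y, z).
Proof.
  intros Hy Hz Ha Hb Ea Eb. split; [reflexivity | split].
  - unfold in_Q3, px, py, pz; simpl. repeat split; auto.
    is_rat_closure; lra.
  - intros P HP. simpl in HP. unfold dist3, px, py, pz.
    repeat destruct HP as [<- | HP]; try contradiction; cbn [fst snd];
      match goal with |- is_rat (sqrt ?e) =>
        first [ replace e with (a ^ 2) by (rewrite <- Ea; field)
              | replace e with (b ^ 2) by (rewrite <- Eb; field) ] end;
      now apply is_rat_sqrt_sqr.
Qed.

Definition dist_sum (s m : R) : R := (m + (1 + s^2) / m) / (2 * s).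

Definition plane_point (q s m : R) : point3 :=
  (1/2, (1 + dist_sum s m * q) / 2, ((1 + s^2) / m - m) / 4).

Lemma plane_point_dist0 q s m : q^2 + s^2 = 1 -> s <> 0 -> m <> 0 ->
  1/4 + py (plane_point q s m) ^ 2 + pz (plane_point q s m) ^ 2
  = ((dist_sum s m + q) / 2) ^ 2.
Proof.
  intros Hqs Hs Hm. unfold py, pz, plane_point; cbn [fst snd].
  apply Rminus_diag_uniq.
  transitivity ((dist_sum s m ^ 2 - 1) * (q^2 + s^2 - 1) / 4).
  - unfold dist_sum. field. auto.
  - rewrite Hqs. field.
Qed.

Lemma plane_point_dist1 q s m : q^2 + s^2 = 1 -> s <> 0 -> m <> 0 ->
  1/4 + (py (plane_point q s m) - 1) ^ 2 + pz (plane_point q s m) ^ 2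
  = ((dist_sum s m - q) / 2) ^ 2.
Proof.
  intros Hqs Hs Hm. unfold py, pz, plane_point; cbn [fst snd].
  apply Rminus_diag_uniq.
  transitivity ((dist_sum s m ^ 2 - 1) * (q^2 + s^2 - 1) / 4).
  - unfold dist_sum. field. auto.
  - rewrite Hqs. field.
Qed.

Lemma in_Pi_plane_point q s m : is_rat q -> is_rat s -> is_rat m ->
  q^2 + s^2 = 1 -> s <> 0 -> m <> 0 -> in_Pi (plane_point q s m).
Proof.
  intros Hq Hs Hm Hqs Hs0 Hm0.
  assert (Hp : is_rat (dist_sum s m)).
  { unfold dist_sum. is_rat_closure; auto; lra. }
  apply in_Pi_of_rational_distances with ((dist_sum s m + q) / 2) ((dist_sum s m - q) / 2).
  1-4: is_rat_closure; auto; lra.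
  - now apply plane_point_dist0.
  - now apply plane_point_dist1.
Qed.

Definition circle_x (t : R) : R := (1 - t^2) / (1 + t^2).
Definition circle_y (t : R) : R := 2 * t / (1 + t^2).

Lemma circle_xy_sqr t : circle_y t ^ 2 + circle_x t ^ 2 = 1.
Proof. assert (0 < 1 + t^2) by nra. unfold circle_x, circle_y. field. lra. Qed.

Lemma circle_x_neq0 t : t^2 <> 1 -> circle_x t <> 0.
Proof.
  intros Ht. assert (0 < 1 + t^2) by nra. unfold circle_x.
  apply Rmult_integral_contrapositive_currified; [lra | apply Rinv_neq_0_compat; lra].
Qed.

Lemma circle_half_angle q s : q^2 + s^2 = 1 -> 0 < s ->
  exists t, -1 < t < 1 /\ circle_y t = q /\ circle_x t = s.
Proof.
  intros Hqs Hs. exists (q / (1 + s)).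
  assert (Ht2 : (q / (1 + s)) ^ 2 = (1 - s) / (1 + s)).
  { replace ((q / (1 + s)) ^ 2) with (q ^ 2 / (1 + s) ^ 2) by (field; lra).
    replace (q ^ 2) with ((1 - s) * (1 + s)) by nra. field. lra. }
  assert ((q / (1 + s)) ^ 2 < 1).
  { rewrite Ht2. apply Rmult_lt_reg_r with (1 + s); [lra |].
    unfold Rdiv. rewrite Rmult_assoc, Rinv_l; lra. }
  unfold circle_x, circle_y. rewrite Ht2.
  repeat split; [nra | nra | field | field]; lra.
Qed.

Definition param_point (t m : R) : point3 := plane_point (circle_y t) (circle_x t) m.

Lemma in_Pi_param_point t m : is_rat t -> is_rat m -> t^2 <> 1 -> m <> 0 ->
  in_Pi (param_point t m).
Proof.
  intros Ht Hm Ht1 Hm0. assert (0 < 1 + t^2) by nra.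
  apply in_Pi_plane_point; auto.
  - unfold circle_y. is_rat_closure; auto; lra.
  - unfold circle_x. is_rat_closure; auto; lra.
  - apply circle_xy_sqr.
  - now apply circle_x_neq0.
Qed.

Lemma sqrt_sub_sqr_lt_1 (A B : R) : 0 <= A -> 0 <= B ->
  (A + B - 1) ^ 2 < 4 * A * B -> (sqrt A - sqrt B) ^ 2 < 1.
Proof.
  intros HA HB HAB.
  pose proof (sqrt_sqrt A HA) as Ea. pose proof (sqrt_sqrt B HB) as Eb.
  pose proof (sqrt_pos A). pose proof (sqrt_pos B).
  assert (Hlt : A + B - 1 < 2 * (sqrt A * sqrt B)).
  { destruct (Rlt_or_le (A + B - 1) (2 * (sqrt A * sqrt B))) 
      as [Hlt | Hge]; [exact Hlt |].
    assert (0 <= sqrt A * sqrt B) by nra. nra. }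
  nra.
Qed.

Lemma plane_point_surj y z : exists q s m,
  q^2 + s^2 = 1 /\ 0 < s /\ 0 < m /\ plane_point q s m = (1/2, y, z).
Proof.
  set (A := 1/4 + y^2 + z^2). set (B := 1/4 + (y - 1)^2 + z^2).
  pose proof (pow2_ge_0 y). pose proof (pow2_ge_0 (y - 1)). pose proof (pow2_ge_0 z).
  assert (HA : 0 < A) by (unfold A; lra). assert (HB : 0 < B) by (unfold B; lra).
  pose proof (sqrt_sqrt A (Rlt_le _ _ HA)) as Ea.
  pose proof (sqrt_sqrt B (Rlt_le _ _ HB)) as Eb.
  pose proof (sqrt_lt_R0 A HA). pose proof (sqrt_lt_R0 B HB).
  set (p := sqrt A + sqrt B). set (q := sqrt A - sqrt B).
  assert (Hq : q^2 < 1).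
  { apply sqrt_sub_sqr_lt_1; try lra.
    assert (4 * A * B - (A + B - 1) ^ 2 = 1 + 4 * z^2) by (unfold A, B; field).
    lra. }
  set (s := sqrt (1 - q^2)).
  pose proof (sqrt_sqrt (1 - q^2) ltac:(lra)) as Es.
  assert (Hs : 0 < s) by (apply sqrt_lt_R0; lra).
  assert (Hpq : p * q = 2 * y - 1) by (unfold p, q; unfold A, B in *; nra).
  assert (Hps : (p * s) ^ 2 = 1 + s^2 + 4 * z^2).
  { replace ((p * s) ^ 2) with (p^2 * (s * s)) by ring. fold s in Es.
    unfold p, q in *. unfold A, B in *. nra. }
  assert (Hps0 : 0 < p * s) by (unfold p; nra).
  set (m := p * s - 2 * z).
  assert (Hm : 0 < m) by (unfold m; nra).
  assert (Ec : (1 + s^2) / m = p * s + 2 * z).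
  { apply Rmult_eq_reg_r with m; [| lra]. field_simplify; [| lra].
    unfold m. nra. }
  exists q, s, m. repeat split; try lra.
  - fold s in Es. nra.
  - unfold plane_point, dist_sum. rewrite Ec. f_equal; [f_equal |].
    + replace ((m + (p * s + 2 * z)) / (2 * s)) with p by (unfold m; field; lra).
      rewrite Hpq. field.
    + unfold m. field.
Qed.

Lemma param_point_surj y z : exists t m,
  -1 < t < 1 /\ 0 < m /\ param_point t m = (1/2, y, z).
Proof.
  destruct (plane_point_surj y z) as (q & s & m & Hqs & Hs & Hm & E).
  destruct (circle_half_angle q s Hqs Hs) as (t & Ht & Eq & Es).
  exists t, m. unfold param_point. rewrite Eq, Es. auto.
Qed.

Section RealContinuity.

Context {U : UniformSpace} (x : U).

Lemma continuous_Rplus_fun (f g : U -> R) :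
  continuous f x -> continuous g x -> continuous (fun y => f y + g y) x.
Proof. apply (continuous_plus (V := R_NormedModule)). Qed.

Lemma continuous_Rmult_fun (f g : U -> R) :
  continuous f x -> continuous g x -> continuous (fun y => f y * g y) x.
Proof. apply (continuous_mult (K := R_AbsRing)). Qed.

Lemma continuous_Rminus_fun (f g : U -> R) :
  continuous f x -> continuous g x -> continuous (fun y => f y - g y) x.
Proof. apply (continuous_minus (V := R_NormedModule)). Qed.

Lemma continuous_Rinv_fun (f : U -> R) :
  continuous f x -> f x <> 0 -> continuous (fun y => / f y) x.
Proof. intros Hf Hx. apply continuous_comp; [exact Hf | now apply continuous_Rinv]. Qed.

Lemma continuous_Rdiv_fun (f g : U -> R) :
  continuous f x -> continuous g x -> g x <> 0 -> continuous (fun y => f y / g y) x.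
Proof.
  intros Hf Hg Hx. apply continuous_Rmult_fun; [exact Hf | now apply continuous_Rinv_fun].
Qed.

Lemma continuous_pow_fun (f : U -> R) n :
  continuous f x -> continuous (fun y => f y ^ n) x.
Proof.
  intros Hf. induction n as [|n IH]; simpl.
  - apply continuous_const.
  - now apply continuous_Rmult_fun.
Qed.

End RealContinuity.

Ltac continuity_closure := repeat match goal with
  | |- continuous (fun _ => _ / _) _ => apply continuous_Rdiv_fun
  | |- continuous (fun _ => _ + _) _ => apply continuous_Rplus_fun
  | |- continuous (fun _ => _ - _) _ => apply continuous_Rminus_fun
  | |- continuous (fun _ => _ * _) _ => apply continuous_Rmult_fun
  | |- continuous (fun _ => _ ^ _) _ => apply continuous_pow_fun
  | |- continuous fst _ => apply continuous_fst
  | |- continuous snd _ => apply continuous_snd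
  | |- continuous (fun _ => _) _ => apply continuous_const
  end.

Lemma param_point_continuous t0 m0 : t0^2 <> 1 -> m0 <> 0 ->
  continuous (fun X : R * R => py (param_point (fst X) (snd X))) (t0, m0) /\
  continuous (fun X : R * R => pz (param_point (fst X) (snd X))) (t0, m0).
Proof.
  intros Ht Hm. assert (0 < 1 + t0^2) by nra.
  assert (2 * circle_x t0 <> 0) by (pose proof (circle_x_neq0 t0 Ht); lra).
  unfold py, pz, param_point, plane_point, dist_sum, circle_x, circle_y in *.
  cbn [fst snd]. split; continuity_closure; cbn [fst snd]; auto; lra.
Qed.

Lemma Q2R_dense x eps : 0 < eps -> exists q : Q, Rabs (Q2R q - x) < eps.
Proof.
  intros He.
  destruct (archimed (/ eps)) as [Hn _].
  assert (0 < / eps) by (apply Rinv_0_lt_compat; lra).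
  set (n := up (/ eps)) in *.
  assert (Hn0 : (0 < n)%Z) by (apply lt_IZR; simpl; lra).
  assert (0 < IZR n) by (apply IZR_lt; lia).
  destruct (archimed (x * IZR n)) as [Hlo Hhi].
  exists (Qmake (up (x * IZR n)) (Z.to_pos n)).
  unfold Q2R; simpl. rewrite Z2Pos.id by lia.
  set (k := IZR (up (x * IZR n))) in *.
  replace (k * / IZR n - x) with ((k - x * IZR n) / IZR n) by (field; lra).
  rewrite Rabs_pos_eq by (apply Rdiv_le_0_compat; lra).
  apply Rle_lt_trans with (1 / IZR n).
  - apply Rmult_le_compat_r; [left; apply Rinv_0_lt_compat |]; lra.
  - replace eps with (/ / eps) by (field; lra).
    unfold Rdiv. rewrite Rmult_1_l. apply Rinv_lt_contravar; nra.
Qed.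

Lemma locally_rational_pair (X : R * R) (P : R * R -> Prop) :
  locally X P -> exists q r : Q, P (Q2R q, Q2R r).
Proof.
  intros [e He].
  destruct (Q2R_dense (fst X) e (cond_pos e)) as [q Hq].
  destruct (Q2R_dense (snd X) e (cond_pos e)) as [r Hr].
  exists q, r. apply He. split; assumption.
Qed.

Lemma continuous_locally_Rabs {U : UniformSpace} (f : U -> R) x eps :
  continuous f x -> 0 < eps -> locally x (fun y => Rabs (f y - f x) < eps).
Proof. intros Hf He. exact (Hf _ (locally_ball (f x) (mkposreal eps He))). Qed.

Lemma param_point_approx y z eps : 0 < eps -> exists t m : Q,
  Q2R t ^ 2 <> 1 /\ Q2R m <> 0 /\
  Rabs (py (param_point (Q2R t) (Q2R m)) - y) < eps /\
  Rabs (pz (param_point (Q2R t) (Q2R m)) - z) < eps.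
Proof.
  intros He.
  destruct (param_point_surj y z) as (t0 & m0 & Ht0 & Hm0 & E).
  assert (Hd : 0 < 1 - Rabs t0) by (unfold Rabs; destruct Rcase_abs; lra).
  destruct (param_point_continuous t0 m0 ltac:(nra) ltac:(lra)) as [Cy Cz].
  assert (Hnear : locally (t0, m0) (fun X =>
    (Rabs (fst X - t0) < 1 - Rabs t0 /\ Rabs (snd X - m0) < m0) /\
    Rabs (py (param_point (fst X) (snd X)) - y) < eps /\
    Rabs (pz (param_point (fst X) (snd X)) - z) < eps)).
  { repeat apply filter_and.
    - exact (continuous_locally_Rabs fst (t0, m0) _ (continuous_fst t0 m0) Hd).
    - exact (continuous_locally_Rabs snd (t0, m0) _ (continuous_snd t0 m0) Hm0).
    - replace y with (py (param_point (fst (t0, m0)) (snd (t0, m0))))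
        by (cbn [fst snd]; rewrite E; reflexivity).
      exact (continuous_locally_Rabs _ _ _ Cy He).
    - replace z with (pz (param_point (fst (t0, m0)) (snd (t0, m0))))
        by (cbn [fst snd]; rewrite E; reflexivity).
      exact (continuous_locally_Rabs _ _ _ Cz He). }
  destruct (locally_rational_pair _ _ Hnear) as (t & m & (Ht & Hm) & Hy & Hz).
  cbn [fst snd] in *. exists t, m. repeat split; auto.
  - apply Rabs_def2 in Ht. pose proof (Rle_abs t0). pose proof (Rle_abs (- t0)).
    rewrite Rabs_Ropp in *. nra.
  - apply Rabs_def2 in Hm. lra.
Qed.

Lemma dist3_le_Rabs p q :
  dist3 p q <= Rabs (px p - px q) + Rabs (py p - py q) + Rabs (pz p - pz q).
Proof.
  unfold dist3.
  set (a := px p - px q). set (b := py p - py q). set (c := pz p - pz q).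
  pose proof (Rabs_pos a). pose proof (Rabs_pos b). pose proof (Rabs_pos c).
  rewrite <- (sqrt_pow2 (Rabs a + Rabs b + Rabs c)) by lra.
  apply sqrt_le_1_alt.
  rewrite <- (pow2_abs a), <- (pow2_abs b), <- (pow2_abs c). nra.
Qed.

Theorem theorem3p2 :
  forall P : point3, in_pi P ->
  forall eps : R, 0 < eps ->
  exists M : point3, in_Pi M /\ dist3 M P < eps.
Proof.
  intros [[x y] z] Hpi eps He. unfold in_pi, px in Hpi; cbn in Hpi; subst x.
  destruct (param_point_approx y z (eps / 2) ltac:(lra)) as (t & m & Ht & Hm & Hy & Hz).
  exists (param_point (Q2R t) (Q2R m)). split.
  - apply in_Pi_param_point; auto using is_rat_Q.
  - eapply Rle_lt_trans; [apply dist3_le_Rabs |].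
    change (px (param_point (Q2R t) (Q2R m))) with (px (1/2, y, z)).
    change (py (1/2, y, z)) with y. change (pz (1/2, y, z)) with z.
    rewrite Rminus_diag, Rabs_R0. lra.
Qed.
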